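(* Consider a power network with $N$ buses and $n$ generators (synchronous or converter-based), $n \le N$, each generator connected to a distinct bus. Let $\mathbf{B}_{\mathrm{BB}} \in \mathbb{R}^{N\times N}$ and $\mathbf{B}_{\mathrm{BG}} \in \mathbb{R}^{N\times n}$ be as described in the context, and suppose the bus frequency variations $\Delta\boldsymbol{\omega}_B(t)\in\mathbb{R}^N$ and generator rotor speed deviations $\Delta\boldsymbol{\omega}_G(t)\in\mathbb{R}^n$ satisfy, for all $t \ge 0$, $$\Delta\boldsymbol{\omega}_B(t) = -\mathbf{B}_{\mathrm{BB}}^{+}\,\mathbf{B}_{\mathrm{BG}}\,\Delta\boldsymbol{\omega}_G(t).$$ Suppose the generator connected to the $i$-th network bus is the one inducing forced oscillations, i.e. the rotor speed deviations of all other generators are identically zero. Then for all $t\ge 0$ and all $j \in \{1,\ldots,N\}$ with $j \ne i$, $$|\Delta\boldsymbol{\omega}_{B,i}(t)| \ge |\Delta\boldsymbol{\omega}_{B,j}(t)|,$$ where $\Delta\boldsymbol{\omega}_{B,k}(t)$ denotes the $k$-th component of $\Delta\boldsymbol{\omega}_B(t)$.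
   Context: This is the noise-free ''frequency divider'' model of bus frequencies. $\mathbf{H}^+$ denotes the Moore–Penrose pseudo-inverse of a matrix $\mathbf{H}$. $\mathbf{B}_{\mathrm{BB}} = \mathbf{B}_{\mathrm{BUS}} + \mathbf{B}_{\mathrm{GG}}$, where $\mathbf{B}_{\mathrm{BUS}}\in\mathbb{R}^{N\times N}$ is the imaginary part of the network admittance matrix and $\mathbf{B}_{\mathrm{GG}}\in\mathbb{R}^{N\times N}$ is diagonal with $(k,k)$ entry equal to the inverse of the internal reactance of the machine at bus $k$ if a machine is connected there and $0$ otherwise. $\mathbf{B}_{\mathrm{BG}}\in\mathbb{R}^{N\times n}$ encodes susceptances between generators and the buses they are connected to: the column of $\mathbf{B}_{\mathrm{BG}}$ corresponding to a generator connected to bus $k$ is zero except for a single strictly positive entry in row $k$. Standing facts assumed in the paper about $\mathbf{B}_{\mathrm{BB}}^+$: every entry is nonnegative, and it is diagonally dominant both row-wise and column-wise (the magnitude of each diagonal entry is at least the sum of the magnitudes of the other entries in its row, and likewise in its column). *)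

From HB Require Import structures.
From mathcomp Require Import all_boot all_order all_algebra.
From mathcomp Require Export reals.
Set Implicit Arguments. Unset Strict Implicit. Unset Printing Implicit Defensive.
Import Order.TTheory GRing.Theory Num.Theory.
Local Open Scope ring_scope.

Definition is_MP_pinv (R : realType) (m n : nat)
  (A : 'M[R]_(m, n)) (X : 'M[R]_(n, m)) : Prop :=
  [/\ A *m X *m A = A, X *m A *m X = X,
      (A *m X)^T = A *m X & (X *m A)^T = X *m A].

Definition entrywise_nonneg (R : realType) (m n : nat) (A : 'M[R]_(m, n)) : Prop :=
  forall i j, 0 <= A i j.

Definition row_diag_dominant (R : realType) (N : nat) (A : 'M[R]_N) : Prop :=
  forall i : 'I_N, \sum_(j < N | j != i) `|A i j| <= `|A i i|.

Definition col_diag_dominant (R : realType) (N : nat) (A : 'M[R]_N) : Prop :=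
  forall j : 'I_N, \sum_(i < N | i != j) `|A i j| <= `|A j j|.

Definition is_BGG (R : realType) (N n : nat) (gen : 'I_n -> 'I_N)
  (x : 'I_n -> R) (BGG : 'M[R]_N) : Prop :=
  forall k l : 'I_N,
    BGG k l = if k == l then
                (if [pick g | gen g == k] is Some g then (x g)^-1 else 0)
              else 0.

Definition is_BBG (R : realType) (N n : nat) (gen : 'I_n -> 'I_N)
  (BBG : 'M[R]_(N, n)) : Prop :=
  forall (k : 'I_N) (g : 'I_n),
    (k == gen g -> 0 < BBG k g) /\ (k != gen g -> BBG k g = 0).

From HB Require Import structures.
From mathcomp Require Import all_boot all_order all_algebra.
From mathcomp Require Import reals.
Set Implicit Arguments. Unset Strict Implicit. Unset Printing Implicit Defensive.
Import Order.TTheory GRing.Theory Num.Theory.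
Local Open Scope ring_scope.

(* When only the generator at bus i oscillates, B_BG Δω_G is supported at
   bus i, so Δω_B is a scalar multiple of the i-th column of B_BB^+.
   Column diagonal dominance makes the diagonal entry the largest entry of
   that column in absolute value. *)

Lemma col_diag_dominant_le_diag (R : realType) (N : nat) (A : 'M[R]_N)
    (i j : 'I_N) :
  col_diag_dominant A -> j != i -> `|A j i| <= `|A i i|.
Proof.
move=> domA neq_ji; apply: le_trans (domA i).
rewrite (bigD1 j) //= lerDl.
by apply: sumr_ge0 => k _; exact: normr_ge0.
Qed.

Lemma mulmx_col_supported1 (R : pzRingType) (m n : nat) (A : 'M[R]_(m, n))
    (v : 'cV[R]_n) (g : 'I_n) :
  (forall g', g' != g -> v g' 0 = 0) ->
  forall k, (A *m v) k 0 = A k g * v g 0.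
Proof.
move=> supp_v k; rewrite mxE (bigD1 g) //= big1 ?addr0 //.
by move=> g' /supp_v ->; rewrite mulr0.
Qed.

Lemma is_BBG_mulmx_supported1 (R : realType) (N n : nat)
    (gen : 'I_n -> 'I_N) (BBG : 'M[R]_(N, n)) (v : 'cV[R]_n) (g : 'I_n) :
  is_BBG gen BBG -> (forall g', g' != g -> v g' 0 = 0) ->
  forall k, k != gen g -> (BBG *m v) k 0 = 0.
Proof.
move=> hBG supp_v k neq_k.
rewrite (mulmx_col_supported1 _ supp_v).
by have [_ ->] := hBG k g; rewrite ?mul0r.
Qed.

Theorem proposition1 (R : realType) (N n : nat)
  (gen : 'I_n -> 'I_N) (x : 'I_n -> R)
  (BBUS BGG BBB Bp : 'M[R]_N) (BBG : 'M[R]_(N, n))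
  (wB : R -> 'cV[R]_N) (wG : R -> 'cV[R]_n) (i : 'I_N) :
  (n <= N)%N ->
  injective gen ->
  (forall g, 0 < x g) ->
  is_BGG gen x BGG ->
  BBB = BBUS + BGG ->
  is_BBG gen BBG ->
  is_MP_pinv BBB Bp ->
  entrywise_nonneg Bp ->
  row_diag_dominant Bp ->
  col_diag_dominant Bp ->
  (forall t, 0 <= t -> wB t = - (Bp *m BBG *m wG t)) ->
  (exists g : 'I_n, gen g = i /\
     forall g' : 'I_n, g' != g -> forall t, 0 <= t -> wG t g' 0 = 0) ->
  forall t, 0 <= t -> forall j : 'I_N, j != i ->
    `|wB t j 0| <= `|wB t i 0|.
Proof.
move=> _ _ _ _ _ hBG _ _ _ domBp hwB [g [gen_g only_g]] t t_ge0 j neq_ji.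
have supp_wG g' (neq_g : g' != g) : wG t g' 0 = 0 by exact: only_g.
have supp_BBGw : forall k, k != i -> (BBG *m wG t) k 0 = 0.
  by rewrite -gen_g; exact: is_BBG_mulmx_supported1 hBG supp_wG.
have wB_col k : wB t k 0 = - (Bp k i * (BBG *m wG t) i 0).
  by rewrite hwB // mxE -mulmxA (mulmx_col_supported1 _ supp_BBGw).
rewrite !wB_col !normrN !normrM ler_wpM2r //.
exact: col_diag_dominant_le_diag.
Qed.
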